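(* Let $T\in\mathbb{N}$, let $\mathbf{x}$ be a configuration and let $A(\mathbf{x},\cdot):[T]\to[0,1]$ satisfy the concavity assumption. For any $t\in[T]$, let $H^{(\mathbf{x})}=(A(\mathbf{x},1),\dots,A(\mathbf{x},t))$. Then $\textsc{Pred}(H^{(\mathbf{x})})\ge A(\mathbf{x},T)$.
   Context: $[T]=\{1,\dots,T\}$. Concavity assumption: for all $b\in\{2,\dots,T-1\}$, $A(\mathbf{x},b+1)-A(\mathbf{x},b)\le A(\mathbf{x},b)-A(\mathbf{x},b-1)$. For a finite sequence $H=(H_1,\dots,H_m)$, $\textsc{Pred}(H)$ is defined as follows: if $m=1$ return $+\infty$; otherwise, with $t_2=m$, $t_1=m-1$, $a_1=H_{t_1}$, $a_2=H_{t_2}$, return $a_2+(a_2-a_1)(T-t_2)$. *)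

From Stdlib Require Import Reals List.
From Coquelicot Require Import Rbar.
Import ListNotations.
Open Scope R_scope.

(* Pred(H) for a finite sequence H = (H_1,...,H_m) with horizon T:
   if m = 1 return +oo; otherwise with t2 = m, t1 = m-1, a1 = H_{t1},
   a2 = H_{t2}, return a2 + (a2 - a1)(T - t2).
   (For the empty sequence, which never arises, we also return +oo.) *)
Definition Pred (T : nat) (H : list R) : Rbar :=
  let m := length H in
  match m with
  | O | S O => p_infty
  | S (S _) =>
      let a1 := nth (m - 2)%nat H 0 in
      let a2 := nth (m - 1)%nat H 0 in
      Finite (a2 + (a2 - a1) * (INR T - INR m))
  end.

Definition history (A : nat -> R) (t : nat) : list R :=
  map A (seq 1 t).

Definition concave_on (T : nat) (A : nat -> R) : Prop :=
  forall b : nat, (2 <= b)%nat -> (b <= T - 1)%nat ->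
    A (S b) - A b <= A b - A (pred b).

(* By concavity the increments [A (b+1) - A b] are nonincreasing on [2, T],
   so beyond [t] the sequence grows by at most the last observed increment
   per step: [A T <= A t + (T - t) (A t - A (t-1))], which is [Pred]. *)
From Stdlib Require Import Reals List Lra Lia.
From Coquelicot Require Import Rbar.
Open Scope R_scope.

Lemma concave_on_increment_le (T : nat) (f : nat -> R) (t b : nat) :
  concave_on T f -> (2 <= t <= b)%nat -> (b <= T)%nat ->
  f b - f (pred b) <= f t - f (pred t).
Proof.
  intros Hc Htb HbT. induction b as [|b IH]; [lia|].
  destruct (Nat.eq_dec t (S b)) as [-> | Hne]; [lra|].
  assert (Hstep := Hc b ltac:(lia) ltac:(lia)).
  specialize (IH ltac:(lia) ltac:(lia)). simpl pred in *. lra.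
Qed.

Lemma concave_on_le_tangent (T : nat) (f : nat -> R) (t k : nat) :
  concave_on T f -> (2 <= t)%nat -> (t + k <= T)%nat ->
  f (t + k)%nat <= f t + INR k * (f t - f (pred t)).
Proof.
  intros Hc Ht. induction k as [|k IH]; intros Hk.
  - rewrite Nat.add_0_r. simpl. lra.
  - specialize (IH ltac:(lia)).
    assert (Hinc := concave_on_increment_le T f t (S (t + k)) Hc
                      ltac:(lia) ltac:(lia)).
    rewrite Nat.add_succ_r, S_INR. simpl pred in Hinc. lra.
Qed.

Lemma nth_history (f : nat -> R) (t i : nat) :
  (i < t)%nat -> nth i (history f t) 0 = f (S i).
Proof.
  intros Hi. unfold history.
  rewrite (nth_indep _ 0 (f 0%nat)) by (rewrite length_map, length_seq; lia).
  rewrite map_nth, seq_nth by lia. reflexivity.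
Qed.

Lemma Pred_history (T : nat) (f : nat -> R) (t : nat) :
  (2 <= t)%nat ->
  Pred T (history f t) = Finite (f t + (f t - f (pred t)) * (INR T - INR t)).
Proof.
  intros Ht. unfold Pred.
  replace (length (history f t)) with t
    by (unfold history; rewrite length_map, length_seq; reflexivity).
  destruct t as [|[|t']]; [lia | lia |].
  rewrite !nth_history by lia.
  replace (S (S (S t') - 2)) with (S t') by lia.
  replace (S (S (S t') - 1)) with (S (S t')) by lia.
  reflexivity.
Qed.

Theorem lemma5 (X : Type) (A : X -> nat -> R) (T : nat) (x : X) :
  (forall b : nat, (1 <= b <= T)%nat -> 0 <= A x b <= 1) ->
  concave_on T (A x) ->
  forall t : nat, (1 <= t <= T)%nat ->
    Rbar_le (Finite (A x T)) (Pred T (history (A x) t)).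
Proof.
  intros _ Hc t Ht.
  destruct (Nat.eq_dec t 1) as [-> | Ht1]; [exact I |].
  rewrite Pred_history by lia. simpl.
  assert (Htan := concave_on_le_tangent T (A x) t (T - t) Hc
                    ltac:(lia) ltac:(lia)).
  replace (t + (T - t))%nat with T in Htan by lia.
  rewrite minus_INR in Htan by lia. lra.
Qed.
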